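(* Let $M$ be a structure whose theory is NTP$_2$, let $G$ be an $\emptyset$-definable group in $M$, and let $\psi(x,\bar y)$ be a formula implying $x\in G$. Then there is $k=k_\psi\in\mathbb N$ such that the following holds. Suppose $H\le G$ is a subgroup, $(T_i)_{i\in J}$ are groups, $\pi:H\to\prod_{i\in J}T_i$ is an epimorphism onto the Cartesian product, and $\pi_j:H\to T_j$ is the composition of $\pi$ with the projection to $T_j$. Suppose that for each $j\in J$ there are a subgroup $\bar R_j\le G$ and a proper subgroup $R_j<T_j$ with $\bar R_j\cap H=\pi_j^{-1}(R_j)$, such that all finite intersections of the groups $\bar R_j$ are uniformly definable by instances $\psi(x,\bar a)$ of $\psi$. Then $|J|\le k$. Moreover, if the theory of $M$ is NIP, then the same conclusion (a finite bound on $|J|$ depending only on the defining formula) holds under the weaker assumption that the groups $\bar R_j$ ($j\in J$) themselves are uniformly definable by instances of a single formula.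
   Context: A formula $\phi(\bar x,\bar y)$ has TP$_2$ if there are $k\in\mathbb N$, a model and parameters $\bar a_{ij}$ ($i,j\in\mathbb N$) such that for each $i$ the formulas $\phi(\bar x,\bar a_{ij})$ ($j\in\mathbb N$) are $k$-inconsistent, and for every $f:\mathbb N\to\mathbb N$ the set $\{\phi(\bar x,\bar a_{i,f(i)}):i\in\mathbb N\}$ is consistent; a theory is NTP$_2$ if no formula has TP$_2$. A theory is NIP if no formula has the independence property. *)

From mathcomp Require Import all_boot.
Set Implicit Arguments. Unset Strict Implicit. Unset Printing Implicit Defensive.

Record signature := Signature {
  func : Type; farity : func -> nat;
  rel : Type; rarity : rel -> nat }.

Record structure (L : signature) := Structure {
  carrier :> Type;
  witness : carrier;
  interp_f : forall f : func L, ('I_(farity f) -> carrier) -> carrier;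
  interp_r : forall r : rel L, ('I_(rarity r) -> carrier) -> Prop }.

Inductive term (L : signature) : Type :=
| Var : nat -> term L
| App : forall f : func L, ('I_(farity f) -> term L) -> term L.

(* variables are natural numbers; (Ex i p) binds variable i *)
Inductive formula (L : signature) : Type :=
| FEq : term L -> term L -> formula L
| FRel : forall r : rel L, ('I_(rarity r) -> term L) -> formula L
| FBot : formula L
| FNot : formula L -> formula L
| FAnd : formula L -> formula L -> formula L
| FOr : formula L -> formula L -> formula L
| FImp : formula L -> formula L -> formula L
| FEx : nat -> formula L -> formula L
| FAll : nat -> formula L -> formula L.

Section Semantics.
Variables (L : signature) (M : structure L).

Fixpoint eval (v : nat -> M) (t : term L) : M :=
  match t with
  | Var i => v i
  | App f ts => @interp_f L M f (fun i => eval v (ts i))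
  end.

Definition upd (v : nat -> M) (i : nat) (a : M) : nat -> M :=
  fun j => if j == i then a else v j.

Fixpoint sat (v : nat -> M) (p : formula L) : Prop :=
  match p with
  | FEq t1 t2 => eval v t1 = eval v t2
  | FRel r ts => @interp_r L M r (fun i => eval v (ts i))
  | FBot => False
  | FNot p => ~ sat v p
  | FAnd p q => sat v p /\ sat v q
  | FOr p q => sat v p \/ sat v q
  | FImp p q => sat v p -> sat v q
  | FEx i p => exists a, sat (upd v i a) p
  | FAll i p => forall a, sat (upd v i a) p
  end.
End Semantics.

Fixpoint term_vars_in L (P : nat -> Prop) (t : term L) : Prop :=
  match t with
  | Var i => P i
  | App f ts => forall i, term_vars_in P (ts i)
  end.

Fixpoint fvars_in L (P : nat -> Prop) (p : formula L) : Prop :=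
  match p with
  | FEq t1 t2 => term_vars_in P t1 /\ term_vars_in P t2
  | FRel r ts => forall i, term_vars_in P (ts i)
  | FBot => True
  | FNot p => fvars_in P p
  | FAnd p q | FOr p q | FImp p q => fvars_in P p /\ fvars_in P q
  | FEx i p | FAll i p => fvars_in (fun j => j = i \/ P j) p
  end.

Definition tenv (M : Type) (d : M) (n : nat) (x : 'I_n -> M) : nat -> M :=
  fun j => odflt d (omap x (insub j)).

Definition envcat (M : Type) (n : nat) (v w : nat -> M) : nat -> M :=
  fun j => if j < n then v j else w (j - n).

(* M |= p(x, y), where x gives variables 0..n-1 and y variables n..n+m-1 *)
Definition holds L (M : structure L) (n m : nat) (p : formula L)
  (x : 'I_n -> M) (y : 'I_m -> M) : Prop :=
  @sat L M (envcat n (tenv (witness M) x) (tenv (witness M) y)) p.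

Definition holds3 L (M : structure L) (n : nat) (p : formula L)
  (x y z : 'I_n -> M) : Prop :=
  @sat L M (envcat n (tenv (witness M) x)
          (envcat n (tenv (witness M) y) (tenv (witness M) z))) p.

(* N is a model of Th(M): every formula valid in M (i.e. whose universal
   closure is true in M) is valid in N *)
Definition models_th L (M N : structure L) : Prop :=
  forall p : formula L, (forall v, @sat L M v p) -> forall v, @sat L N v p.

Definition TP2 L (M : structure L) (phi : formula L) (p q : nat) : Prop :=
  fvars_in (fun j => j < p + q) phi /\
  exists (k : nat) (N : structure L), models_th M N /\
  exists a : nat -> nat -> 'I_q -> N,
    (forall (i : nat) (s : seq nat), uniq s -> size s = k ->
       ~ exists x : 'I_p -> N, forall j, j \in s -> holds phi x (a i j)) /\
    (* every path is consistent, i.e. finitely satisfiable in N *)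
    (forall (f : nat -> nat) (n0 : nat),
       exists x : 'I_p -> N, forall i, i < n0 -> holds phi x (a i (f i))).

Definition NTP2 L (M : structure L) : Prop :=
  forall (phi : formula L) (p q : nat), ~ TP2 M phi p q.

Definition IP L (M : structure L) (phi : formula L) (p q : nat) : Prop :=
  fvars_in (fun j => j < p + q) phi /\
  exists N : structure L, models_th M N /\
  exists (a : nat -> 'I_p -> N) (b : (nat -> Prop) -> 'I_q -> N),
    forall (i : nat) (S : nat -> Prop), holds phi (a i) (b S) <-> S i.

Definition NIP L (M : structure L) : Prop :=
  forall (phi : formula L) (p q : nat), ~ IP M phi p q.

Record dgroup (M : Type) (n : nat) := DGroup {
  gdom : ('I_n -> M) -> Prop;
  gmul : ('I_n -> M) -> ('I_n -> M) -> ('I_n -> M);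
  gone : 'I_n -> M;
  ginv : ('I_n -> M) -> ('I_n -> M);
  gmul_closed : forall a b, gdom a -> gdom b -> gdom (gmul a b);
  gone_in : gdom gone;
  ginv_closed : forall a, gdom a -> gdom (ginv a);
  gmulA : forall a b c, gdom a -> gdom b -> gdom c ->
            gmul a (gmul b c) = gmul (gmul a b) c;
  gmul1 : forall a, gdom a -> gmul gone a = a /\ gmul a gone = a;
  gmulV : forall a, gdom a -> gmul (ginv a) a = gone /\ gmul a (ginv a) = gone }.

Definition zero_definable L (M : structure L) (n : nat) (G : dgroup M n) : Prop :=
  exists (delta mu : formula L),
    fvars_in (fun j => j < n + 0) delta /\
    fvars_in (fun j => j < n + (n + n)) mu /\
    (forall x : 'I_n -> M, gdom G x <-> holds delta x (fun i : 'I_0 => witness M)) /\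
    (forall a b c : 'I_n -> M, gdom G a -> gdom G b -> gdom G c ->
       (gmul G a b = c <-> holds3 mu a b c)).

Definition dsubgroup (M : Type) (n : nat) (G : dgroup M n)
  (P : ('I_n -> M) -> Prop) : Prop :=
  (forall x, P x -> gdom G x) /\ P (gone G) /\
  (forall a b, P a -> P b -> P (gmul G a b)) /\ (forall a, P a -> P (ginv G a)).

Record Grp := Grp_ {
  gcar :> Type;
  gop : gcar -> gcar -> gcar;
  gid : gcar;
  gi : gcar -> gcar;
  gopA : forall a b c, gop a (gop b c) = gop (gop a b) c;
  gop1 : forall a, gop gid a = a;
  gopV : forall a, gop (gi a) a = gid }.

Definition proper_subgroup (T : Grp) (R : T -> Prop) : Prop :=
  R (gid T) /\ (forall a b, R a -> R b -> R (gop a b)) /\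
  (forall a, R a -> R (gi a)) /\ exists t, ~ R t.

Definition lemma_setting (M : Type) (n : nat) (G : dgroup M n)
  (H : ('I_n -> M) -> Prop) (J : Type) (T : J -> Grp)
  (pi : ('I_n -> M) -> forall j, T j)
  (Rbar : J -> ('I_n -> M) -> Prop) (R : forall j, T j -> Prop) : Prop :=
  dsubgroup G H /\
  (forall a b, H a -> H b -> pi (gmul G a b) = (fun j => gop (pi a j) (pi b j))) /\
  (forall t : forall j, T j, exists h, H h /\ pi h = t) /\
  (forall j, dsubgroup G (Rbar j)) /\
  (forall j, proper_subgroup (R j)) /\
  (forall j h, H h -> (Rbar j h <-> R j (pi h j))).

Definition card_le (J : Type) (k : nat) : Prop :=
  exists f : J -> 'I_k, injective f.

From mathcomp Require Import all_boot zify.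
From mathcomp Require Import boolp classical_sets filter.
Set Implicit Arguments. Unset Strict Implicit. Unset Printing Implicit Defensive.

(* Let delta and mu define G and its multiplication, and let phi(x; y, z) say
   x \in z * psi(M, y).  If J is large, pick distinct indices e(i, j) in J for
   i, j <= l, parameters y_i defining the intersection A_i of the row
   Rbar_(e(i, k)), k <= l, and z_ij in H whose image under pi is some t outside R
   at the coordinate e(i, j) and trivial elsewhere.  The cosets z_ij A_i and
   z_ij' A_i are disjoint, since otherwise pi_(e(i, j)) (z_ij'^-1 z_ij) = t would
   lie in R; and for a path f, any s in H whose image is t exactly at the
   coordinates e(i, f i) lies in every z_(i, f i) A_i.  An ultrapower over a
   nonprincipal ultrafilter glues these finite arrays, for all l, into a TP2
   array in a model of Th(M).  Under NIP one takes instead 2^(l+1) indices e(S),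
   S a subset of {0..l}, and b_i in H whose image is t exactly at the e(S) with
   i outside S, so that b_i \in Rbar_(e(S)) iff i \in S: this is the
   independence property. *)

Section Renaming.
Variable L : signature.

Fixpoint trename (r : nat -> nat) (t : term L) : term L :=
  match t with
  | Var i => Var L (r i)
  | App f ts => App (fun i => trename r (ts i))
  end.

Fixpoint frename (r : nat -> nat) (p : formula L) : formula L :=
  match p with
  | FEq t1 t2 => FEq (trename r t1) (trename r t2)
  | FRel s ts => FRel (fun i => trename r (ts i))
  | FBot => FBot L
  | FNot p => FNot (frename r p)
  | FAnd p q => FAnd (frename r p) (frename r q)
  | FOr p q => FOr (frename r p) (frename r q)
  | FImp p q => FImp (frename r p) (frename r q)
  | FEx i p => FEx (r i) (frename r p)
  | FAll i p => FAll (r i) (frename r p)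
  end.

Fixpoint ex_block (k b : nat) (p : formula L) : formula L :=
  if k is k'.+1 then FEx b (ex_block k' b.+1 p) else p.

Lemma tvars_in_rename (P Q : nat -> Prop) (r : nat -> nat) :
  (forall j, P j -> Q (r j)) -> forall t : term L,
  term_vars_in P t -> term_vars_in Q (trename r t).
Proof. by move=> PQ; elim=> [i|g ts IH] /=; [exact: PQ|move=> h i; exact: IH]. Qed.

Lemma fvars_in_rename (r : nat -> nat) (p : formula L) (P Q : nat -> Prop) :
  (forall j, P j -> Q (r j)) -> fvars_in P p -> fvars_in Q (frename r p).
Proof.
elim: p P Q => [t1 t2|s ts||p IH|p IHp q IHq|p IHp q IHq|p IHp q IHq|i p IH|i p IH]
  P Q PQ /=; try by move=> [/(IHp _ _ PQ) ? /(IHq _ _ PQ) ?].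
- by move=> [? ?]; split; exact: (tvars_in_rename PQ).
- by move=> h i; exact: (tvars_in_rename PQ).
- by [].
- exact: IH.
- by apply: IH => j [->|/PQ]; [left|right].
- by apply: IH => j [->|/PQ]; [left|right].
Qed.

Lemma tvars_in_sub (P Q : nat -> Prop) :
  (forall j, P j -> Q j) -> forall t : term L, term_vars_in P t -> term_vars_in Q t.
Proof. by move=> PQ; elim=> [i|g ts IH] /=; [exact: PQ|move=> h i; exact: IH]. Qed.

Lemma fvars_in_sub (p : formula L) (P Q : nat -> Prop) :
  (forall j, P j -> Q j) -> fvars_in P p -> fvars_in Q p.
Proof.
elim: p P Q => [t1 t2|s ts||p IH|p IHp q IHq|p IHp q IHq|p IHp q IHq|i p IH|i p IH]
  P Q PQ /=; try by move=> [/(IHp _ _ PQ) ? /(IHq _ _ PQ) ?].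
- by move=> [? ?]; split; exact: (tvars_in_sub PQ).
- by move=> h i; exact: (tvars_in_sub PQ).
- by [].
- exact: IH.
- by apply: IH => j [->|/PQ]; [left|right].
- by apply: IH => j [->|/PQ]; [left|right].
Qed.

Lemma fvars_in_ex_block k b (p : formula L) (Q : nat -> Prop) :
  fvars_in (fun j => (b <= j < b + k) \/ Q j) p -> fvars_in Q (ex_block k b p).
Proof.
elim: k b p Q => [|k IH] b p Q /=; first by apply: fvars_in_sub => j [|//]; lia.
move=> h; apply: IH; apply: fvars_in_sub h => j [h|h]; last by right; right.
by case: (eqVneq j b) => [->|/eqP ne]; [right; left|left; lia].
Qed.

Variable M : structure L.

Lemma eval_rename (r : nat -> nat) (v : nat -> M) (t : term L) :
  eval v (trename r t) = eval (v \o r) t.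
Proof. by elim: t => [i|g ts IH] //=; congr interp_f; apply: funext => i. Qed.

Lemma sat_rename (r : nat -> nat) (p : formula L) (v : nat -> M) :
  injective r -> (sat v (frename r p) <-> sat (v \o r) p).
Proof.
move=> r_inj; have updE w i a : upd w (r i) a \o r = upd (w \o r) i a.
  by apply: funext => j; rewrite /upd /= (inj_eq r_inj).
elim: p v => [t1 t2|s ts||p IH|p IHp q IHq|p IHp q IHq|p IHp q IHq|i p IH|i p IH] v /=;
  rewrite ?IH ?IHp ?IHq ?eval_rename //.
- by have -> : (fun i => eval v (trename r (ts i))) = (fun i => eval (v \o r) (ts i))
    by apply: funext => i; rewrite eval_rename.
- by split=> -[a ha]; exists a; move: ha; rewrite IH updE.
- by split=> h a; move: (h a); rewrite IH updE.
Qed.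

Lemma eval_ext (P : nat -> Prop) (v w : nat -> M) (t : term L) :
  term_vars_in P t -> (forall j, P j -> v j = w j) -> eval v t = eval w t.
Proof.
move=> + vw; elim: t => [i|g ts IH] /=; first exact: vw.
by move=> h; congr interp_f; apply: funext => i; exact: IH.
Qed.

Lemma sat_ext (P : nat -> Prop) (v w : nat -> M) (p : formula L) :
  fvars_in P p -> (forall j, P j -> v j = w j) -> (sat v p <-> sat w p).
Proof.
have updE (Q : nat -> Prop) (v' w' : nat -> M) i a : (forall j, Q j -> v' j = w' j) ->
    forall j, j = i \/ Q j -> upd v' i a j = upd w' i a j.
  by move=> e j [->|/e]; rewrite /upd; [rewrite eqxx|case: eqP].
elim: p P v w => [t1 t2|s ts||p IH|p IHp q IHq|p IHp q IHq|p IHp q IHq|i p IH|i p IH]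
  P v w /= h e; try by rewrite (IHp _ _ _ h.1 e) (IHq _ _ _ h.2 e).
- by rewrite (eval_ext h.1 e) (eval_ext h.2 e).
- by have -> : (fun i => eval v (ts i)) = (fun i => eval w (ts i))
    by apply: funext => i; exact: eval_ext (h i) e.
- by [].
- by rewrite (IH _ _ _ h e).
- by split=> -[a ha]; exists a; move: ha; rewrite (IH _ _ _ h (updE _ _ _ i a e)).
- by split=> ha a; move: (ha a); rewrite (IH _ _ _ h (updE _ _ _ i a e)).
Qed.

Lemma sat_ex_block k b (p : formula L) (v : nat -> M) :
  sat v (ex_block k b p) <->
  exists w : nat -> M, sat (fun j => if b <= j < b + k then w j else v j) p.
Proof.
elim: k b v => [|k IH] b v /=.
  have outE (w : nat -> M) : (fun j => if b <= j < b + 0 then w j else v j) = v.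
    by apply: funext => j; case: ifP => //; lia.
  by split=> [h|[w]]; [exists v|]; rewrite outE.
have blockE (w : nat -> M) :
    (fun j => if b.+1 <= j < b.+1 + k then w j else upd v b (w b) j) =
    (fun j => if b <= j < b + k.+1 then w j else v j).
  apply: funext => j; rewrite /upd; case: (eqVneq j b) => [->|/eqP ne].
    by rewrite ifF ?ifT //; lia.
  by have -> : (b.+1 <= j < b.+1 + k) = (b <= j < b + k.+1) by lia.
split=> [[a /IH [w h]]|[w h]]; last by exists (w b); apply/IH; exists w; rewrite blockE.
exists (fun j => if j == b then a else w j); rewrite -blockE eqxx.
congr (sat _ p): h; apply: funext => j; case: ifP => // hj.
by rewrite ifF //; apply/eqP; lia.
Qed.
End Renaming.

Section Environments.
Variables (T : Type) (d : T).

Lemma tenv_lt k (x : 'I_k -> T) j (lt_jk : j < k) : tenv d x j = x (Ordinal lt_jk).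
Proof. by rewrite /tenv insubT. Qed.

Lemma tenv_ge k (x : 'I_k -> T) j : k <= j -> tenv d x j = d.
Proof. by move=> le_kj; rewrite /tenv insubF // ltnNge le_kj. Qed.

Definition envcat_tuples m n (y : 'I_m -> T) (z : 'I_n -> T) : 'I_(m + n) -> T :=
  fun k => envcat m (tenv d y) (tenv d z) k.

Lemma tenv_envcat_tuples m n (y : 'I_m -> T) (z : 'I_n -> T) :
  tenv d (envcat_tuples y z) = envcat m (tenv d y) (tenv d z).
Proof.
apply: funext => j; case: (ltnP j (m + n)) => hj; first by rewrite tenv_lt.
by rewrite tenv_ge // /envcat ifF ?tenv_ge //; lia.
Qed.
End Environments.

Section CosetFormula.
Variables (L : signature) (M : structure L) (n m : nat) (delta mu psi : formula L).
Hypothesis delta_vars : fvars_in (fun j => j < n + 0) delta.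
Hypothesis mu_vars : fvars_in (fun j => j < n + (n + n)) mu.
Hypothesis psi_vars : fvars_in (fun j => j < n + m) psi.

(* The variables of [coset_formula] are [x] (0..n-1), then the parameters [y]
   (n..n+m-1) and [z] (n+m..n+m+n-1); the bound block [w] sits at [arity..]. *)
Let arity := n + (m + n).
Let rename_psi j := if j < n then j + arity else if j < n + m then j else j + arity + n.
Let rename_mu j := if j < n then j + (n + m) else if j < n + n then j - n + arity
  else if j < n + n + n then j - (n + n) else j + arity + n.

(* If [delta] defines G and [mu] the graph of its multiplication, this says
   [x \in z * psi(M, y)]. *)
Definition coset_formula : formula L :=
  FAnd delta (ex_block n arity (FAnd (frename rename_psi psi) (frename rename_mu mu))).

Lemma coset_formula_vars : fvars_in (fun j => j < n + (m + n)) coset_formula.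
Proof.
split; first by apply: fvars_in_sub delta_vars => j; lia.
apply: fvars_in_ex_block; split.
  apply: fvars_in_rename psi_vars => j h.
  by rewrite /rename_psi /arity; repeat (case: ifP => ?); lia.
apply: fvars_in_rename mu_vars => j h.
by rewrite /rename_mu /arity; repeat (case: ifP => ?); lia.
Qed.

Lemma rename_psi_inj : injective rename_psi.
Proof. by move=> i j; rewrite /rename_psi /arity; repeat (case: ifP => ?); lia. Qed.

Lemma rename_mu_inj : injective rename_mu.
Proof. by move=> i j; rewrite /rename_mu /arity; repeat (case: ifP => ?); lia. Qed.

Lemma sat_coset_block (x w z : 'I_n -> M) (y : 'I_m -> M) :
  let E := envcat n (tenv (witness M) x)
             (envcat m (tenv (witness M) y) (tenv (witness M) z)) in
  sat (fun j => if arity <= j < arity + n then tenv (witness M) w (j - arity) else E j)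
      (FAnd (frename rename_psi psi) (frename rename_mu mu)) <->
  holds psi w y /\ holds3 mu z w x.
Proof.
move=> E; set Ew := fun j => _.
rewrite /= !sat_rename; [|exact: rename_mu_inj|exact: rename_psi_inj].
have -> : sat (Ew \o rename_psi) psi <-> holds psi w y.
  apply: sat_ext psi_vars _ => j hj; rewrite /Ew /= /rename_psi /E /envcat /arity.
  case: (ltnP j n) => ? /=; last case: (ltnP j (n + m)) => ? /=;
    by repeat (case: ifP => ?); try lia; congr (tenv _ _ _); lia.
have -> // : sat (Ew \o rename_mu) mu <-> holds3 mu z w x.
apply: sat_ext mu_vars _ => j hj; rewrite /Ew /= /rename_mu /E /envcat /arity.
case: (ltnP j n) => ? /=; last case: (ltnP j (n + n)) => ? /=;
  last case: (ltnP j (n + n + n)) => ? /=;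
  by repeat (case: ifP => ?); try lia; congr (tenv _ _ _); lia.
Qed.

Lemma holds_coset_formula (x z : 'I_n -> M) (y : 'I_m -> M) :
  holds coset_formula x (envcat_tuples (witness M) y z) <->
  holds delta x (fun _ : 'I_0 => witness M) /\
  exists w, holds psi w y /\ holds3 mu z w x.
Proof.
rewrite /holds /coset_formula /= tenv_envcat_tuples.
set E := envcat n _ _.
have -> : sat E delta <-> sat (envcat n (tenv (witness M) x)
                                  (tenv (witness M) (fun _ : 'I_0 => witness M))) delta.
  by apply: sat_ext delta_vars _ => j; rewrite addn0 /E /envcat => ->.
rewrite sat_ex_block; split=> -[dx hw]; split=> //.
- have [W hW] := hw; exists (fun i : 'I_n => W (i + arity)); apply/sat_coset_block.
  congr (sat _ _): hW; apply: funext => j; case: ifP => // hj.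
  have lt_j : j - arity < n by move: hj; rewrite /arity; lia.
  by rewrite (tenv_lt _ _ lt_j) /= subnK //; move: hj; rewrite /arity; lia.
- have [w /sat_coset_block hW] := hw; by exists (fun j => tenv (witness M) w (j - arity)).
Qed.
End CosetFormula.

Section CosetFormulaGroup.
Variables (L : signature) (M : structure L) (n m : nat) (G : dgroup M n).
Variables (delta mu psi : formula L).
Hypothesis delta_vars : fvars_in (fun j => j < n + 0) delta.
Hypothesis mu_vars : fvars_in (fun j => j < n + (n + n)) mu.
Hypothesis psi_vars : fvars_in (fun j => j < n + m) psi.
Hypothesis delta_def : forall x, gdom G x <-> holds delta x (fun _ : 'I_0 => witness M).
Hypothesis mu_def : forall a b c, gdom G a -> gdom G b -> gdom G c ->
  (gmul G a b = c <-> holds3 mu a b c).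
Hypothesis psi_sub : forall (x : 'I_n -> M) (y : 'I_m -> M), holds psi x y -> gdom G x.

Lemma holds_coset_formulaE (x z : 'I_n -> M) (y : 'I_m -> M) : gdom G z ->
  holds (coset_formula n m delta mu psi) x (envcat_tuples (witness M) y z) <->
  gdom G x /\ exists w, holds psi w y /\ gmul G z w = x.
Proof.
move=> Gz; rewrite holds_coset_formula // -delta_def.
by split=> -[Gx [w [psi_w zw]]]; split=> //; exists w; split=> //;
  apply/(mu_def Gz (psi_sub psi_w) Gx).
Qed.
End CosetFormulaGroup.

Section AbstractGroup.
Variable T : Grp.

Lemma gop_idem (a : T) : gop a a = a -> a = gid T.
Proof. by move=> aa; rewrite -[LHS]gop1 -(gopV a) -gopA aa. Qed.

Lemma gopVr (a : T) : gop a (gi a) = gid T.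
Proof. by apply: gop_idem; rewrite -gopA [gop (gi a) _]gopA gopV gop1. Qed.

Lemma gop1r (a : T) : gop a (gid T) = a.
Proof. by rewrite -(gopV a) gopA gopVr gop1. Qed.

Lemma gi_unique (a b : T) : gop a b = gid T -> a = gi b.
Proof. by move=> ab; rewrite -[a]gop1r -(gopVr b) gopA ab gop1. Qed.

Lemma gi1 : gi (gid T) = gid T.
Proof. by rewrite -[LHS]gop1r gopV. Qed.
End AbstractGroup.

Section DefinableGroup.
Variables (M : Type) (n : nat) (G : dgroup M n).

Lemma gmulKV z x : gdom G z -> gdom G x -> gmul G z (gmul G (ginv G z) x) = x.
Proof.
move=> Gz Gx; rewrite gmulA //; last exact: ginv_closed.
by rewrite (gmulV Gz).2 (gmul1 Gx).1.
Qed.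

Lemma dsubgroup_cosets_meet (S : ('I_n -> M) -> Prop) z z' w w' :
  dsubgroup G S -> gdom G z -> gdom G z' -> S w -> S w' ->
  gmul G z w = gmul G z' w' -> S (gmul G (ginv G z') z).
Proof.
move=> [sSG [_ [S_mul S_inv]]] Gz Gz' Sw Sw' zw.
have [Gw Gw'] := (sSG _ Sw, sSG _ Sw'); have [Gz'V GwV] := (ginv_closed Gz', ginv_closed Gw).
suff -> : gmul G (ginv G z') z = gmul G w' (ginv G w) by apply: S_mul => //; apply: S_inv.
rewrite -[LHS](gmul1 (gmul_closed Gz'V Gz)).2 -(gmulV Gw).2 gmulA //; try exact: gmul_closed.
rewrite -[gmul G (gmul G (ginv G z') z) w]gmulA // zw gmulA //.
by rewrite (gmulV Gz').1 (gmul1 Gw').1.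
Qed.
End DefinableGroup.

Section Setting.
Variables (M : Type) (n : nat) (G : dgroup M n) (H : ('I_n -> M) -> Prop).
Variables (J : Type) (T : J -> Grp) (pi : ('I_n -> M) -> forall j, T j).
Variables (Rbar : J -> ('I_n -> M) -> Prop) (R : forall j, T j -> Prop).
Hypothesis setting : lemma_setting G H pi Rbar R.

Lemma pi_gone j : pi (gone G) j = gid (T j).
Proof.
have [[sHG [H1 _]] [pi_mul _]] := setting; apply: gop_idem.
by have := congr1 (@^~ j) (pi_mul _ _ H1 H1); rewrite /= (gmul1 (sHG _ H1)).1.
Qed.

Lemma pi_ginv z j : H z -> pi (ginv G z) j = gi (pi z j).
Proof.
have [[sHG [_ [_ H_inv]]] [pi_mul _]] := setting => Hz; apply: gi_unique.
have := congr1 (@^~ j) (pi_mul _ _ (H_inv _ Hz) Hz).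
by rewrite /= (gmulV (sHG _ Hz)).1 pi_gone.
Qed.

Lemma Rbar_ginvM_of_pi_eq z s c : H z -> H s -> pi s c = pi z c ->
  Rbar c (gmul G (ginv G z) s).
Proof.
have [[_ [_ [H_mul H_inv]]] [pi_mul [_ [_ [R_proper R_pi]]]]] := setting.
move=> Hz Hs sz; have Hzs := H_mul _ _ (H_inv _ Hz) Hs.
apply/(R_pi _ _ Hzs); rewrite (pi_mul _ _ (H_inv _ Hz) Hs) /= pi_ginv // sz gopV.
by case: (R_proper c).
Qed.

Lemma R_of_cosets_meet z z' w w' c : H z -> H z' -> Rbar c w -> Rbar c w' ->
  gmul G z w = gmul G z' w' -> @R c (gop (gi (pi z' c)) (pi z c)).
Proof.
have [[sHG [_ [H_mul H_inv]]] [pi_mul [_ [Rbar_sub [_ R_pi]]]]] := setting.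
move=> Hz Hz' Rw Rw' zw; have Hzz := H_mul _ _ (H_inv _ Hz') Hz.
have := dsubgroup_cosets_meet (Rbar_sub c) (sHG _ Hz) (sHG _ Hz') Rw Rw' zw.
by move/(R_pi _ _ Hzz); rewrite (pi_mul _ _ (H_inv _ Hz') Hz) /= pi_ginv.
Qed.
End Setting.

Section ProdRestrict.
Variables (J : Type) (T : J -> Grp).

Definition prod_restrict (D : J -> Prop) (t : forall j, T j) : forall j, T j :=
  fun j => if pselect (D j) then t j else gid (T j).

Lemma prod_restrict_in D t j : D j -> prod_restrict D t j = t j.
Proof. by rewrite /prod_restrict; case: pselect. Qed.

Lemma prod_restrict_out D t j : ~ D j -> prod_restrict D t j = gid (T j).
Proof. by rewrite /prod_restrict; case: pselect. Qed.

Lemma prod_restrict_iff D D' t j : (D j <-> D' j) ->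
  prod_restrict D t j = prod_restrict D' t j.
Proof.
rewrite /prod_restrict => DD'.
by case: (pselect (D j)); case: (pselect (D' j)) => // ? ?; exfalso; tauto.
Qed.
End ProdRestrict.

Lemma card_le_widen (J : Type) k k' : k <= k' -> card_le J k -> card_le J k'.
Proof.
move=> le_kk' [f f_inj]; exists (widen_ord le_kk' \o f) => a b /(congr1 val) /= ab.
exact/f_inj/val_inj.
Qed.

Lemma ord_inj_of_not_card_le (J : Type) K : ~ card_le J K -> exists g : 'I_K -> J, injective g.
Proof.
elim: K => [|K IH] notle; first by (have g : 'I_0 -> J by case); exists g; case.
have [g g_inj] := IH (fun le => notle (card_le_widen (leqnSn K) le)).
have [j0 j0_new] : exists j0, forall i, g i <> j0.
  apply: contrapT => g_onto; apply: notle; apply: card_le_widen (leqnSn K) _.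
  have [ginv ginvK] : {ginv : J -> 'I_K & forall j, g (ginv j) = j}.
    apply: (@choice _ _ (fun j i => g i = j)) => j; apply: contrapT => no_i.
    by apply: g_onto; exists j => i gij; apply: no_i; exists i.
  by exists ginv => j j' /(congr1 g); rewrite !ginvK.
exists (fun i => if unlift ord_max i is Some i' then g i' else j0).
move=> i i'; case: unliftP => [k ->|->]; case: unliftP => [k' ->|->] //.
- by move/g_inj ->.
- by move/j0_new.
- by move/esym/j0_new.
Qed.

Lemma fin_inj_of_not_card_le (J : Type) K (X : finType) :
  ~ card_le J K -> #|X| <= K -> exists e : X -> J, injective e.
Proof.
move=> notle leXK; have [g g_inj] := ord_inj_of_not_card_le notle.
exists (g \o widen_ord leXK \o enum_rank) => x x' /g_inj /(congr1 val) /= xx'.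
exact/enum_rank_inj/val_inj.
Qed.

Lemma inord_inj l i j : i <= l -> j <= l -> @inord l i = @inord l j -> i = j.
Proof. by move=> il jl /(congr1 (@nat_of_ord l.+1)); rewrite !inordK. Qed.

Definition tp2_pattern L (M : structure L) (p q : nat) (phi : formula L) (l : nat)
  (a : nat -> nat -> 'I_q -> M) : Prop :=
  (forall i j j' (x : 'I_p -> M), i <= l -> j <= l -> j' <= l -> j != j' ->
     holds phi x (a i j) -> ~ holds phi x (a i j')) /\
  (forall f : nat -> nat, (forall i, i <= l -> f i <= l) ->
     exists x : 'I_p -> M, forall i, i <= l -> holds phi x (a i (f i))).

Definition ip_pattern L (M : structure L) (p q : nat) (phi : formula L) (l : nat)
  (b : nat -> 'I_p -> M) (c : (nat -> Prop) -> 'I_q -> M) : Prop :=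
  forall i (S : nat -> Prop), i <= l -> (holds phi (b i) (c S) <-> S i).

Section Arrays.
Variables (L : signature) (M : structure L) (n m : nat) (G : dgroup M n) (psi : formula L).
Variables (H : ('I_n -> M) -> Prop) (J : Type) (T : J -> Grp).
Variables (pi : ('I_n -> M) -> forall j, T j).
Variables (Rbar : J -> ('I_n -> M) -> Prop) (R : forall j, T j -> Prop).
Hypothesis setting : lemma_setting G H pi Rbar R.

Section TP2Array.
Variables (delta mu : formula L).
Hypothesis delta_vars : fvars_in (fun j => j < n + 0) delta.
Hypothesis mu_vars : fvars_in (fun j => j < n + (n + n)) mu.
Hypothesis psi_vars : fvars_in (fun j => j < n + m) psi.
Hypothesis delta_def : forall x, gdom G x <-> holds delta x (fun _ : 'I_0 => witness M).
Hypothesis mu_def : forall a b c, gdom G a -> gdom G b -> gdom G c ->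
  (gmul G a b = c <-> holds3 mu a b c).
Hypothesis psi_sub : forall (x : 'I_n -> M) (y : 'I_m -> M), holds psi x y -> gdom G x.

Variables (t : forall j, T j) (pre : (forall j, T j) -> 'I_n -> M).
Hypothesis t_notin_R : forall j, ~ @R j (t j).
Hypothesis pre_spec : forall s, H (pre s) /\ pi (pre s) = s.
Variables (l : nat) (e : 'I_l.+1 * 'I_l.+1 -> J) (y : nat -> 'I_m -> M).
Hypothesis e_inj : injective e.
Hypothesis y_def : forall i x,
  (forall k, k <= l -> Rbar (e (inord i, inord k)) x) <-> holds psi x (y i).

Let cell i j := e (inord i, inord j).
Let z i j := pre (prod_restrict (eq^~ (cell i j)) t).
Let array i j := envcat_tuples (witness M) (y i) (z i j).

Lemma cell_inj i j i' j' : i <= l -> j <= l -> i' <= l -> j' <= l ->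
  cell i j = cell i' j' -> i = i' /\ j = j'.
Proof. by move=> il jl il' jl' /e_inj [/inord_inj-> // /inord_inj->]. Qed.

Let z_in_H i j : H (z i j). Proof. exact: (pre_spec _).1. Qed.

Let holds_arrayE x i j : holds (coset_formula n m delta mu psi) x (array i j) <->
  gdom G x /\ exists w, holds psi w (y i) /\ gmul G (z i j) w = x.
Proof.
have [[sHG _] _] := setting.
exact: (holds_coset_formulaE delta_vars mu_vars psi_vars delta_def mu_def psi_sub)
  _ _ _ (sHG _ (z_in_H i j)).
Qed.

Lemma array_row_inconsistent i j j' (x : 'I_n -> M) : i <= l -> j <= l -> j' <= l -> j != j' ->
  holds (coset_formula n m delta mu psi) x (array i j) ->
  ~ holds (coset_formula n m delta mu psi) x (array i j').
Proof.
move=> il jl jl' /eqP neq /holds_arrayE [_ [w [psi_w zw]]] /holds_arrayE [_ [w' [psi_w' zw']]].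
have Rw := (y_def _ _).2 psi_w j jl; have Rw' := (y_def _ _).2 psi_w' j jl.
have := R_of_cosets_meet setting (z_in_H i j) (z_in_H i j') Rw Rw' (etrans zw (esym zw')).
have pi_z : pi (z i j) (cell i j) = t (cell i j).
  by rewrite (pre_spec _).2 prod_restrict_in.
have pi_z' : pi (z i j') (cell i j) = gid (T (cell i j)).
  by rewrite (pre_spec _).2 prod_restrict_out // => /cell_inj-/(_ il jl il jl') [_ /neq].
by rewrite pi_z pi_z' gi1 gop1; apply: t_notin_R.
Qed.

Lemma array_path_consistent f : (forall i, i <= l -> f i <= l) ->
  exists x : 'I_n -> M,
    forall i, i <= l -> holds (coset_formula n m delta mu psi) x (array i (f i)).
Proof.
move=> f_le; pose D jj := exists2 i, i <= l & jj = cell i (f i).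
have [Hs pi_s] := pre_spec (prod_restrict D t).
exists (pre (prod_restrict D t)) => i il.
have [[sHG _] _] := setting; have Gz := sHG _ (z_in_H i (f i)).
apply/holds_arrayE; split; first exact: sHG.
exists (gmul G (ginv G (z i (f i))) (pre (prod_restrict D t))).
split; last exact: gmulKV Gz (sHG _ Hs).
apply/y_def => k kl; apply: (Rbar_ginvM_of_pi_eq setting (z_in_H _ _) Hs).
rewrite pi_s (pre_spec _).2; apply: prod_restrict_iff.
split=> [[i' il' /cell_inj]|->]; last by exists i.
by case/(_ il kl il' (f_le _ il')) => <- ->.
Qed.

Lemma array_tp2_pattern : tp2_pattern n (coset_formula n m delta mu psi) l array.
Proof. by split; [exact: array_row_inconsistent|exact: array_path_consistent]. Qed.
End TP2Array.

Section IPArray.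
Variables (t : forall j, T j) (pre : (forall j, T j) -> 'I_n -> M).
Hypothesis t_notin_R : forall j, ~ @R j (t j).
Hypothesis pre_spec : forall s, H (pre s) /\ pi (pre s) = s.

Variables (l : nat) (e : {ffun 'I_l.+1 -> bool} -> J) (c : {ffun 'I_l.+1 -> bool} -> 'I_m -> M).
Hypothesis e_inj : injective e.
Hypothesis c_def : forall S x, Rbar (e S) x <-> holds psi x (c S).

Let b i := pre (prod_restrict (fun j => exists2 S, j = e S & ~~ S (inord i)) t).
Let code (S : nat -> Prop) : {ffun 'I_l.+1 -> bool} := [ffun k : 'I_l.+1 => `[< S k >]].

Lemma array_ip_pattern : ip_pattern psi l b (c \o code).
Proof.
move=> i S il; have [_ [_ [_ [_ [R_proper R_pi]]]]] := setting.
have [Hb pi_b] := pre_spec (prod_restrict (fun j => exists2 S, j = e S & ~~ S (inord i)) t).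
rewrite /= -c_def (R_pi _ _ Hb) pi_b.
have codeE : code S (inord i) = `[< S i >] by rewrite ffunE inordK.
case: (pselect (S i)) => Si.
  rewrite prod_restrict_out; first by have [] := R_proper (e (code S)).
  by move=> [S' /e_inj <-]; rewrite codeE asboolT.
rewrite prod_restrict_in; last by exists (code S); rewrite // codeE asboolF.
by split=> // /t_notin_R.
Qed.
End IPArray.

Lemma setting_witnesses : exists (t : forall j, T j) (pre : (forall j, T j) -> 'I_n -> M),
  (forall j, ~ @R j (t j)) /\ forall s, H (pre s) /\ pi (pre s) = s.
Proof.
have [_ [_ [pi_onto [_ [R_proper _]]]]] := setting.
have [pre pre_spec] := choice pi_onto.
have t_ex j : exists t, ~ @R j t by have [_ [_ [_ ex]]] := R_proper j.
by exists (fun j => projT1 (cid (t_ex j))), pre; split=> // j; case: cid.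
Qed.

Lemma tp2_pattern_of_setting (delta mu : formula L) l :
  fvars_in (fun j => j < n + 0) delta -> fvars_in (fun j => j < n + (n + n)) mu ->
  fvars_in (fun j => j < n + m) psi ->
  (forall x, gdom G x <-> holds delta x (fun _ : 'I_0 => witness M)) ->
  (forall a b c, gdom G a -> gdom G b -> gdom G c -> (gmul G a b = c <-> holds3 mu a b c)) ->
  (forall (x : 'I_n -> M) (y : 'I_m -> M), holds psi x y -> gdom G x) ->
  (forall (n0 : nat) (F : nat -> J), exists b : 'I_m -> M,
     forall x, (forall i, i <= n0 -> Rbar (F i) x) <-> holds psi x b) ->
  ~ card_le J (l.+1 * l.+1) ->
  exists a : nat -> nat -> 'I_(m + n) -> M, tp2_pattern n (coset_formula n m delta mu psi) l a.
Proof.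
move=> delta_vars mu_vars psi_vars delta_def mu_def psi_sub meets_def not_le.
have [t [pre [t_notin_R pre_spec]]] := setting_witnesses.
have [e e_inj] : exists e : 'I_l.+1 * 'I_l.+1 -> J, injective e.
  by apply: fin_inj_of_not_card_le not_le _; rewrite card_prod card_ord.
have [y y_def] := choice (fun i => meets_def l (fun k => e (inord i, inord k))).
by eexists; apply: (array_tp2_pattern delta_vars mu_vars psi_vars delta_def mu_def psi_sub
  t_notin_R pre_spec e_inj y_def).
Qed.

Lemma ip_pattern_of_setting l :
  (forall j : J, exists b : 'I_m -> M, forall x, Rbar j x <-> holds psi x b) ->
  ~ card_le J (2 ^ l.+1) ->
  exists (b : nat -> 'I_n -> M) (c : (nat -> Prop) -> 'I_m -> M), ip_pattern psi l b c.
Proof.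
move=> Rbar_def not_le; have [t [pre [t_notin_R pre_spec]]] := setting_witnesses.
have [e e_inj] : exists e : {ffun 'I_l.+1 -> bool} -> J, injective e.
  by apply: fin_inj_of_not_card_le not_le _; rewrite card_ffun card_bool card_ord.
have [c c_def] := choice (fun S => Rbar_def (e S)).
by do 2 eexists; apply: (array_ip_pattern t_notin_R pre_spec e_inj c_def).
Qed.
End Arrays.

Lemma choice_on_nonempty (A B : Type) (a0 : A) (P : B -> A -> Prop) :
  exists g : B -> A, forall k, (exists a, P k a) -> P k (g k).
Proof.
suff /choice [g gP] : forall k, exists a, (exists a', P k a') -> P k a by exists g.
by move=> k; case: (pselect (exists a, P k a)) => [[a Pa]|no]; [exists a|exists a0].
Qed.

Section Ultrapower.
Variables (L : signature) (M : structure L) (U : set_system nat).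
Hypothesis U_ultra : UltraFilter U.

Definition ueq (f g : nat -> M) : Prop := U (fun k => f k = g k).

Lemma ueq_refl f : ueq f f.
Proof. exact: filterE. Qed.

Lemma ueq_trans f g h : ueq f g -> ueq g h -> ueq f h.
Proof. by apply: filterS2 => k ->. Qed.

Lemma ueq_sym f g : ueq f g -> ueq g f.
Proof. exact: filterS. Qed.

Definition ultra_carrier := {P : (nat -> M) -> Prop | exists f, P = ueq f}.

Definition uclass (f : nat -> M) : ultra_carrier := exist _ (ueq f) (ex_intro _ f erefl).

Definition urepr (c : ultra_carrier) : nat -> M := projT1 (cid (proj2_sig c)).

Lemma uclass_eq f g : uclass f = uclass g <-> ueq f g.
Proof.
split=> [/(congr1 (@proj1_sig _ _)) /= ->|fg]; first exact: ueq_refl.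
apply: eq_exist; apply/funext => h; apply/propext.
by split; apply: ueq_trans; [exact: ueq_sym|].
Qed.

Lemma ureprK c : uclass (urepr c) = c.
Proof.
case: c => P Pf; rewrite /urepr /=; case: cid => f /= Pf_eq.
by apply: eq_exist; rewrite Pf_eq.
Qed.

Lemma urepr_uclass f : ueq (urepr (uclass f)) f.
Proof. by apply/uclass_eq; rewrite ureprK. Qed.

Definition ultrapower : structure L := @Structure L ultra_carrier (uclass (fun=> witness M))
  (fun g args => uclass (fun k => @interp_f L M g (fun i => urepr (args i) k)))
  (fun r args => U (fun k => @interp_r L M r (fun i => urepr (args i) k))).

Lemma eval_ultrapower (v : nat -> ultrapower) (f : nat -> nat -> M) (t : term L) :
  (forall j, v j = uclass (f j)) -> eval v t = uclass (fun k => eval (f^~ k) t).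
Proof.
move=> vf; elim: t => [i|g ts IH] /=; first exact: vf.
have reprE : U (fun k => forall i, urepr (eval v (ts i)) k = eval (f^~ k) (ts i)).
  by apply: filter_forall => i; rewrite IH; apply: urepr_uclass.
by apply/uclass_eq; apply: filterS reprE => k eq_k; congr interp_f; apply: funext.
Qed.

Lemma filter_iff (E A B : nat -> Prop) :
  U E -> (forall k, E k -> (A k <-> B k)) -> (U A <-> U B).
Proof. by move=> UE AB; split; apply: filterS2 UE => k /AB->. Qed.

Lemma ultraN (A : nat -> Prop) : U (fun k => ~ A k) <-> ~ U A.
Proof.
split=> [UnA UA|nUA]; last by case: (in_ultra_setVsetC A U_ultra).
by apply: (@filter_const _ U _ False); apply: filterS2 UnA UA.
Qed.

Lemma sat_ultrapower (p : formula L) (v : nat -> ultrapower) (f : nat -> nat -> M) :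
  (forall j, v j = uclass (f j)) -> (sat v p <-> U (fun k => sat (f^~ k) p)).
Proof.
elim: p v f => [t1 t2|r ts||p IH|p IHp q IHq|p IHp q IHq|p IHp q IHq|i p IH|i p IH]
  v f vf /=; rewrite ?(IH _ _ vf) ?(IHp _ _ vf) ?(IHq _ _ vf).
- by rewrite !(eval_ultrapower _ vf) uclass_eq.
- have reprE : U (fun k => forall i, urepr (eval v (ts i)) k = eval (f^~ k) (ts i)).
    by apply: filter_forall => i; rewrite (eval_ultrapower _ vf); apply: urepr_uclass.
  by apply: (filter_iff reprE) => k eq_k; have -> : (fun i => urepr _ k) = _ := funext eq_k.
- by split=> // /filter_const.
- by rewrite ultraN.
- by split=> [[]|UAB]; [exact: filterI|split; apply: filterS UAB => k []].
- split=> [[UA|UB]|UAB]; [by apply: filterS UA => k; left|by apply: filterS UB => k; right|].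
  case: (in_ultra_setVsetC (fun k => sat (f^~ k) p) U_ultra) => [|UnA]; first by left.
  by right; apply: filterS2 UAB UnA => k [].
- split=> [UAB|UAB UA]; last by apply: filterS2 UAB UA => k; apply.
  case: (in_ultra_setVsetC (fun k => sat (f^~ k) p) U_ultra) => [/UAB|UnA].
    by apply: filterS => k Bk _.
  by apply: filterS UnA => k nAk /nAk.
all: have updP (g : nat -> M) :
    sat (upd v i (uclass g)) p <-> U (fun k => sat (upd (f^~ k) i (g k)) p)
  by rewrite (IH _ (fun j => if j == i then g else f j)) => [|j];
    [apply: (filter_iff (@filterT _ U _)) => k _;
     suff -> : (fun j => (if j == i then g else f j) k) = upd (f^~ k) i (g k) by [];
     apply: funext => j|];
    rewrite /upd; case: eqP.
- split=> [[a]|UE]; first by rewrite -(ureprK a) updP; apply: filterS => k; exists (urepr a k).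
  have [g gP] := choice_on_nonempty (witness M) (fun k a => sat (upd (f^~ k) i a) p).
  by exists (uclass g); apply/updP; apply: filterS UE => k /gP.
- split=> [UA|UA a]; last by rewrite -(ureprK a) updP; apply: filterS UA => k; apply.
  apply: contrapT => /ultraN UnA.
  have [g gP] := choice_on_nonempty (witness M) (fun k a => ~ sat (upd (f^~ k) i a) p).
  apply: (@filter_const _ U _ False); apply: filterS2 UnA ((updP g).1 (UA _)) => k.
  by move=> /existsNP/gP.
Qed.

Lemma ultrapower_models_th : models_th M ultrapower.
Proof.
move=> p valid v; apply/(@sat_ultrapower p v (urepr \o v)); first by move=> j; rewrite /= ureprK.
exact: filterE.
Qed.

Lemma holds_ultrapower p q (phi : formula L) (xs : 'I_p -> nat -> M) (ys : 'I_q -> nat -> M) :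
  holds (M := ultrapower) phi (fun i => uclass (xs i)) (fun i => uclass (ys i)) <->
  U (fun k => holds phi (xs^~ k) (ys^~ k)).
Proof.
apply: sat_ultrapower => j; rewrite /envcat /tenv.
by case: ifP => _; case: insub.
Qed.

Lemma uclass_urepr_tuple p (x : 'I_p -> ultrapower) : x = (fun i => uclass (urepr (x i))).
Proof. by apply: funext => i; rewrite ureprK. Qed.

End Ultrapower.

Lemma cofinite_ultrafilter : exists U : set_system nat,
  UltraFilter U /\ forall N, U (fun k => N <= k).
Proof.
have [U [U_ultra le_U]] := ultraFilterLemma eventually_filter.
by exists U; split=> // N; apply: le_U; exists N.
Qed.

Lemma tp2_of_patterns L (M : structure L) (phi : formula L) p q :
  fvars_in (fun j => j < p + q) phi ->
  (forall l, exists a : nat -> nat -> 'I_q -> M, tp2_pattern p phi l a) ->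
  TP2 M phi p q.
Proof.
move=> phi_vars /choice [A A_pat]; split=> //.
have [U [U_ultra cofinite]] := cofinite_ultrafilter.
exists 2, (ultrapower M U); split; first exact: ultrapower_models_th.
exists (fun i j k => uclass U (fun l => A l i j k)); split.
  move=> i [|j [|j' []]] //= /andP[]; rewrite inE => neq _ _ [x hx].
  have := hx j (mem_head _ _); have := hx j' (mem_last j [:: j']).
  rewrite (uclass_urepr_tuple x).
  move=> /(holds_ultrapower U_ultra) Hj' /(holds_ultrapower U_ultra) Hj.
  apply: (@filter_const _ U _ False).
  apply: filterS3 Hj Hj' (cofinite (maxn i (maxn j j'))) => l Hj_l Hj'_l le_l.
  by apply: ((A_pat l).1 i j j' _ _ _ _ neq Hj_l Hj'_l); lia.
move=> f n0; pose bound := n0 + \max_(i < n0) f i.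
pose f' i := if i < n0 then f i else 0.
have f'_le l i : bound <= l -> f' i <= l.
  rewrite /f'; case: ltnP => // lt_i.
  have := @leq_bigmax _ (fun i : 'I_n0 => f i) (Ordinal lt_i).
  by rewrite /bound /=; lia.
have [xs xsP] := choice_on_nonempty (fun=> witness M)
  (fun l (x : 'I_p -> M) => forall i, i <= l -> holds phi x (A l i (f' i))).
exists (fun k => uclass U (xs^~ k)) => i lt_i; apply/(holds_ultrapower U_ultra).
apply: filterS (cofinite bound) => l le_l.
have := xsP l ((A_pat l).2 f' (fun i _ => f'_le l i le_l)) i.
by rewrite /f' lt_i; apply; rewrite /bound in le_l; lia.
Qed.

Lemma ip_of_patterns L (M : structure L) (phi : formula L) p q :
  fvars_in (fun j => j < p + q) phi ->
  (forall l, exists (b : nat -> 'I_p -> M) (c : (nat -> Prop) -> 'I_q -> M),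
     ip_pattern phi l b c) ->
  IP M phi p q.
Proof.
move=> phi_vars /choice [b /choice [c bc_pat]]; split=> //.
have [U [U_ultra cofinite]] := cofinite_ultrafilter.
exists (ultrapower M U); split; first exact: ultrapower_models_th.
exists (fun i k => uclass U (fun l => b l i k)), (fun S k => uclass U (fun l => c l S k)).
move=> i S; rewrite (holds_ultrapower U_ultra); split=> [US|Si].
  apply: contrapT => nSi; apply: (@filter_const _ U _ False).
  by apply: filterS2 US (cofinite i) => l /bc_pat h /h.
by apply: filterS (cofinite i) => l il; apply/bc_pat.
Qed.

Lemma ntp2_card_bound L (M : structure L) n (G : dgroup M n) m (psi : formula L) :
  zero_definable G -> fvars_in (fun j => j < n + m) psi -> NTP2 M ->
  (forall (x : 'I_n -> M) (y : 'I_m -> M), holds psi x y -> gdom G x) ->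
  exists k : nat,
  forall (H : ('I_n -> M) -> Prop) (J : Type) (T : J -> Grp)
    (pi : ('I_n -> M) -> forall j, T j)
    (Rbar : J -> ('I_n -> M) -> Prop) (R : forall j, T j -> Prop),
  lemma_setting G H pi Rbar R ->
  (forall (n0 : nat) (F : nat -> J), exists b : 'I_m -> M,
     forall x : 'I_n -> M, (forall i, i <= n0 -> Rbar (F i) x) <-> holds psi x b) ->
  card_le J k.
Proof.
move=> [delta [mu [delta_vars [mu_vars [delta_def mu_def]]]]] psi_vars ntp2 psi_sub.
apply: contrapT => unbounded; apply: (ntp2 (coset_formula n m delta mu psi) n (m + n)).
apply: tp2_of_patterns; first exact: coset_formula_vars.
move=> l; have [H [J [T [pi [Rbar [R [setting [meets_def not_le]]]]]]]] :
    exists (H : ('I_n -> M) -> Prop) (J : Type) (T : J -> Grp)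
      (pi : ('I_n -> M) -> forall j, T j)
      (Rbar : J -> ('I_n -> M) -> Prop) (R : forall j, T j -> Prop),
      lemma_setting G H pi Rbar R /\
      (forall (n0 : nat) (F : nat -> J), exists b : 'I_m -> M,
         forall x, (forall i, i <= n0 -> Rbar (F i) x) <-> holds psi x b) /\
      ~ card_le J (l.+1 * l.+1).
  apply: contrapT => bounded; apply: unbounded; exists (l.+1 * l.+1) => H J T pi Rbar R s d.
  by apply: contrapT => not_le; apply: bounded; exists H, J, T, pi, Rbar, R.
exact: (tp2_pattern_of_setting setting delta_vars mu_vars psi_vars delta_def mu_def psi_sub).
Qed.

Lemma nip_card_bound L (M : structure L) n (G : dgroup M n) m (psi : formula L) :
  fvars_in (fun j => j < n + m) psi -> NIP M ->
  exists k : nat,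
  forall (H : ('I_n -> M) -> Prop) (J : Type) (T : J -> Grp)
    (pi : ('I_n -> M) -> forall j, T j)
    (Rbar : J -> ('I_n -> M) -> Prop) (R : forall j, T j -> Prop),
  lemma_setting G H pi Rbar R ->
  (forall j : J, exists b : 'I_m -> M, forall x : 'I_n -> M, Rbar j x <-> holds psi x b) ->
  card_le J k.
Proof.
move=> psi_vars nip; apply: contrapT => unbounded; apply: (nip psi n m).
apply: ip_of_patterns => // l.
have [H [J [T [pi [Rbar [R [setting [Rbar_def not_le]]]]]]]] :
    exists (H : ('I_n -> M) -> Prop) (J : Type) (T : J -> Grp)
      (pi : ('I_n -> M) -> forall j, T j)
      (Rbar : J -> ('I_n -> M) -> Prop) (R : forall j, T j -> Prop),
      lemma_setting G H pi Rbar R /\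
      (forall j : J, exists b : 'I_m -> M, forall x, Rbar j x <-> holds psi x b) /\
      ~ card_le J (2 ^ l.+1).
  apply: contrapT => bounded; apply: unbounded; exists (2 ^ l.+1) => H J T pi Rbar R s d.
  by apply: contrapT => not_le; apply: bounded; exists H, J, T, pi, Rbar, R.
exact: (ip_pattern_of_setting setting).
Qed.

Theorem lemma4p3 :
  forall (L : signature) (M : structure L) (n : nat) (G : dgroup M n),
  zero_definable G ->
  forall (m : nat) (psi : formula L),
  fvars_in (fun j => j < n + m) psi ->
  (NTP2 M ->
   (forall (x : 'I_n -> M) (y : 'I_m -> M), holds psi x y -> gdom G x) ->
   exists k : nat,
   forall (H : ('I_n -> M) -> Prop) (J : Type) (T : J -> Grp)
     (pi : ('I_n -> M) -> forall j, T j)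
     (Rbar : J -> ('I_n -> M) -> Prop) (R : forall j, T j -> Prop),
   lemma_setting G H pi Rbar R ->
   (* all (nonempty) finite intersections of the Rbar_j are defined by
      instances of psi *)
   (forall (n0 : nat) (F : nat -> J), exists b : 'I_m -> M,
      forall x : 'I_n -> M,
        (forall i, i <= n0 -> Rbar (F i) x) <-> holds psi x b) ->
   card_le J k)
  /\
  (NIP M ->
   exists k : nat,
   forall (H : ('I_n -> M) -> Prop) (J : Type) (T : J -> Grp)
     (pi : ('I_n -> M) -> forall j, T j)
     (Rbar : J -> ('I_n -> M) -> Prop) (R : forall j, T j -> Prop),
   lemma_setting G H pi Rbar R ->
   (forall j : J, exists b : 'I_m -> M,
      forall x : 'I_n -> M, Rbar j x <-> holds psi x b) ->
   card_le J k).
Proof.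
move=> L M n G G_def m psi psi_vars; split=> [ntp2 psi_sub|].
  exact: ntp2_card_bound.
exact: nip_card_bound.
Qed.
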